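(* Let $\mathcal{V}$ be a finite vocabulary, $L\ge 1$, $\mathbf{m}\notin\mathcal{V}$ a mask token, $\mathcal{Z}:=(\mathcal{V}\cup\{\mathbf{m}\})^L$, and $p_{\mathrm{data}}$ a probability distribution on $\mathcal{V}^L$. Fix an integer $K\ge 1$ and the time grid $t_j:=1-j/K$, $j=0,1,\dots,K$. Let $g_\phi$ be an unmasking policy, i.e. for each $\mathbf{z}\in\mathcal{Z}$ and time $t$, $g_\phi(\cdot\mid\mathbf{z},t)$ is a probability distribution on the masked index set $\mathrm{msk}(\mathbf{z})$. Consider two Markov chains on $\mathcal{Z}$, both started at the fully masked state $(\mathbf{m},\dots,\mathbf{m})$: (1) Idealized inference chain: given $\mathbf{z}_{t_j}$, sample $I_j\sim g_\phi(\cdot\mid\mathbf{z}_{t_j},t_j)$, then sample $V_j\sim p(\mathbf{x}_0^{I_j}=\cdot\mid\mathbf{z}_{t_j})$, and set $\mathbf{z}_{t_{j+1}}:=\mathbf{z}_{t_j}^{(I_j\leftarrow V_j)}$. Let $q_{t_j}$ be the law of $\mathbf{z}_{t_j}$. (2) Teacher-forced chain: first sample $\mathbf{x}_0\sim p_{\mathrm{data}}$ and set $\tilde{\mathbf{z}}_{t_0}=(\mathbf{m},\dots,\mathbf{m})$; given $\tilde{\mathbf{z}}_{t_j}$, sample $I_j\sim g_\phi(\cdot\mid\tilde{\mathbf{z}}_{t_j},t_j)$ and set $\tilde{\mathbf{z}}_{t_{j+1}}:=\tilde{\mathbf{z}}_{t_j}^{(I_j\leftarrow \mathbf{x}_0^{I_j})}$.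 Let $\tilde q_{t_j}$ be the marginal law of $\tilde{\mathbf{z}}_{t_j}$ (after integrating over $\mathbf{x}_0\sim p_{\mathrm{data}}$). Then $q_{t_j}=\tilde q_{t_j}$ for every $j\in\{0,1,\dots,K\}$.
   Context: For $\mathbf{z}\in\mathcal{Z}$, $\mathrm{um}(\mathbf{z}):=\{i\in[L]:\mathbf{z}^i\neq\mathbf{m}\}$ and $\mathrm{msk}(\mathbf{z}):=[L]\setminus\mathrm{um}(\mathbf{z})$. For $i\in[L]$, $v\in\mathcal{V}$, $\mathbf{z}^{(i\leftarrow v)}$ denotes $\mathbf{z}$ with its $i$-th entry replaced by $v$. For $\mathbf{x}_0\sim p_{\mathrm{data}}$, $\mathbf{z}\in\mathcal{Z}$ and $i\in\mathrm{msk}(\mathbf{z})$, the ground-truth unmasking posterior is $p(\mathbf{x}_0^i=v\mid\mathbf{z}):=\mathbb{P}(\mathbf{x}_0^i=v\mid \mathbf{x}_0^{\mathrm{um}(\mathbf{z})}=\mathbf{z}^{\mathrm{um}(\mathbf{z})})$ (for states $\mathbf{z}$ reached with positive probability). The policy $g_\phi$ depends only on the current (partially masked) state and time, not on any hidden clean tokens. *)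

From mathcomp Require Import all_boot all_order all_algebra.
Set Implicit Arguments. Unset Strict Implicit. Unset Printing Implicit Defensive.
Import Order.TTheory GRing.Theory Num.Theory.
Local Open Scope ring_scope.

Section MDM.
Variables (R : realFieldType) (V : finType) (L : nat).

(* Partially masked states: None is the mask token m. *)
Definition state := {ffun 'I_L -> option V}.
Definition clean := {ffun 'I_L -> V}.

Definition full_mask : state := [ffun _ => None].

Definition replace (z : state) (i : 'I_L) (v : V) : state :=
  [ffun k => if k == i then Some v else z k].

Definition masked (z : state) (i : 'I_L) : bool := z i == None.

Definition consistent (z : state) (x : clean) : bool :=
  [forall k, if z k is Some a then x k == a else true].

Definition is_distribution (p : {ffun clean -> R}) : Prop :=
  (forall x, 0 <= p x) /\ \sum_x p x = 1.

Definition is_policy (g : state -> R -> 'I_L -> R) : Prop :=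
  forall z t, (exists i, masked z i) ->
    [/\ forall i, 0 <= g z t i,
        forall i, ~~ masked z i -> g z t i = 0
      & \sum_i g z t i = 1].

(* ground-truth unmasking posterior p(x0^i = v | z) (0 on null events) *)
Definition posterior (p : {ffun clean -> R}) (z : state) (i : 'I_L) (v : V) : R :=
  (\sum_(x | consistent z x && (x i == v)) p x) / (\sum_(x | consistent z x) p x).

Definition tgrid (K j : nat) : R := 1 - j%:R / K%:R.

Fixpoint q_ideal (p : {ffun clean -> R}) (g : state -> R -> 'I_L -> R)
    (K j : nat) : state -> R :=
  match j with
  | 0 => fun z => if z == full_mask then 1 else 0
  | j'.+1 => fun z' =>
      \sum_z q_ideal p g K j' z *
        \sum_i g z (tgrid K j') i *
          \sum_v posterior p z i v * (if z' == replace z i v then 1 else 0)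
  end.

Fixpoint q_tf_joint (p : {ffun clean -> R}) (g : state -> R -> 'I_L -> R)
    (K j : nat) : clean -> state -> R :=
  match j with
  | 0 => fun x z => p x * (if z == full_mask then 1 else 0)
  | j'.+1 => fun x z' =>
      \sum_z q_tf_joint p g K j' x z *
        \sum_i g z (tgrid K j') i * (if z' == replace z i (x i) then 1 else 0)
  end.

Definition q_tf p g K j (z : state) : R := \sum_x q_tf_joint p g K j x z.

End MDM.

From mathcomp Require Import all_boot all_order all_algebra.
Import Order.TTheory GRing.Theory Num.Theory.
Local Open Scope ring_scope.

(* Both laws factor as [P(x0 is consistent with z) * W_j(z)], where W_j(z) is
   the total policy weight of the j-step unmasking paths from the fully masked
   state to z.  For the teacher-forced chain this holds already for the joint
   law, as [p(x) [x consistent with z] W_j(z)], since the policy only sees the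
   state.  For the idealized chain it follows by induction from the identity
   [P(consistent z) p(x0^i = v | z) = [z^i admits v] P(consistent z^(i <- v))]. *)

Section UnmaskingChains.
Variables (R : realFieldType) (V : finType) (L : nat).
Implicit Types (z : state V L) (x : clean V L) (i : 'I_L) (v : V).

(* Accepting [Some v] as well lets the argument cover weights [g] that select
   already unmasked positions. *)
Definition slot_admits (o : option V) v : bool :=
  if o is Some a then v == a else true.

Lemma consistent_full_mask x : consistent (full_mask V L) x.
Proof. by apply/forallP => k; rewrite ffunE. Qed.

Lemma consistent_replace z x i v :
  consistent z x && (x i == v) = slot_admits (z i) v && consistent (replace z i v) x.
Proof.
apply/andP/andP => [[/forallP xz /eqP <-] | [zi /forallP xz']].
  split; first exact: xz i.
  by apply/forallP => k; rewrite ffunE; case: eqP => [->|_]; [rewrite eqxx | exact: xz].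
have xi : x i == v by have := xz' i; rewrite ffunE eqxx.
split=> //; apply/forallP => k; case: (k =P i) => [->|/eqP ki].
  by move: zi; rewrite /slot_admits (eqP xi); case: (z i) => // a /eqP ->.
by have := xz' k; rewrite ffunE (negbTE ki).
Qed.

Lemma consistent_replace_at z x i v : consistent (replace z i v) x -> x i = v.
Proof. by move=> /forallP /(_ i); rewrite ffunE eqxx => /eqP. Qed.

Lemma sum_replace_indicator z z' x i : consistent z' x ->
  \sum_v (if (z' == replace z i v) && slot_admits (z i) v then 1 else 0)
  = (if (z' == replace z i (x i)) && slot_admits (z i) (x i) then 1 else 0) :> R.
Proof.
move=> xz'; rewrite (bigD1 (x i)) //= big1 ?addr0 // => v /negbTE vx.
case: eqP => //= z'E; move: xz'; rewrite z'E => /consistent_replace_at xi.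
by rewrite xi eqxx in vx.
Qed.

Lemma teacher_step_indicator z z' x i :
  (if consistent z x then 1 else 0) * (if z' == replace z i (x i) then 1 else 0)
  = (if consistent z' x then 1 else 0) *
    \sum_v (if (z' == replace z i v) && slot_admits (z i) v then 1 else 0) :> R.
Proof.
have zx := consistent_replace z x i (x i); rewrite eqxx andbT in zx.
case: (z' =P replace z i (x i)) => [z'E|z'N].
  rewrite zx -z'E; case xz': (consistent z' x); rewrite ?andbF ?mul0r //.
  by rewrite (sum_replace_indicator z z' x i xz') z'E eqxx /= ?mulr1 ?mul1r ?andbT.
rewrite mulr0; case xz': (consistent z' x); rewrite ?mul0r //.
by rewrite (sum_replace_indicator z z' x i xz') (introF eqP z'N) mulr0.
Qed.

Variables (p : {ffun clean V L -> R}) (g : state V L -> R -> 'I_L -> R) (K : nat).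

Definition consistent_mass z : R := \sum_(x | consistent z x) p x.

Fixpoint path_weight (j : nat) : state V L -> R :=
  match j with
  | 0 => fun z => if z == full_mask V L then 1 else 0
  | j'.+1 => fun z' =>
      \sum_z path_weight j' z * \sum_i g z (tgrid R K j') i *
        \sum_v (if (z' == replace z i v) && slot_admits (z i) v then 1 else 0)
  end.

Lemma mass_mul_posterior z i v : (forall x, 0 <= p x) ->
  consistent_mass z * posterior p z i v
  = (if slot_admits (z i) v then 1 else 0) * consistent_mass (replace z i v).
Proof.
move=> p_ge0.
have numE : \sum_(x | consistent z x && (x i == v)) p x
    = (if slot_admits (z i) v then 1 else 0) * consistent_mass (replace z i v).
  rewrite (eq_bigl _ _ (fun x => consistent_replace z x i v)).
  by case: slot_admits; rewrite /= ?mul1r ?mul0r ?big_pred0_eq.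
rewrite -numE /posterior -/(consistent_mass z).
have [mass0|mass_neq0] := eqVneq (consistent_mass z) 0; last first.
  by rewrite mulrC divfK.
rewrite mass0 mul0r big1 // => x /andP[zx _].
exact: (psumr_eq0P (fun x _ => p_ge0 x) mass0).
Qed.

Lemma q_tf_jointE j x z :
  q_tf_joint p g K j x z = p x * (if consistent z x then 1 else 0) * path_weight j z.
Proof.
elim: j x z => [|j IH] x z /=.
  by case: eqP => [->|_]; rewrite ?consistent_full_mask ?mulr1 ?mulr0.
under eq_bigr do rewrite IH.
rewrite mulr_sumr; apply: eq_bigr => z0 _; rewrite !mulr_sumr; apply: eq_bigr => i _.
rewrite -!mulrA; congr (_ * _).
do 2![rewrite [LHS]mulrCA [RHS]mulrCA; congr (_ * _)].
exact: teacher_step_indicator.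
Qed.

Lemma q_idealE j z : is_distribution p ->
  q_ideal p g K j z = consistent_mass z * path_weight j z.
Proof.
move=> [p_ge0 p_sum1]; elim: j z => [|j IH] z /=.
  case: eqP => [->|_]; rewrite ?mulr0 // mulr1 -p_sum1.
  by apply: eq_bigl => x; rewrite consistent_full_mask.
under eq_bigr do rewrite IH.
rewrite mulr_sumr; apply: eq_bigr => z0 _.
rewrite !mulr_sumr; apply: eq_bigr => i _; rewrite !mulr_sumr; apply: eq_bigr => v _.
case: (z =P replace z0 i v) => [->|_] /=; last by rewrite !mulr0.
rewrite mulr1 [RHS]mulrC -!mulrA.
by rewrite 2!(mulrCA (consistent_mass z0)) mass_mul_posterior.
Qed.

End UnmaskingChains.

Theorem proposition1 (R : realFieldType) (V : finType) (L : nat)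
  (p : {ffun clean V L -> R}) (g : state V L -> R -> 'I_L -> R) (K : nat) :
  (1 <= L)%N -> (1 <= K)%N -> (K <= L)%N ->
  is_distribution p -> is_policy g ->
  forall j : nat, (j <= K)%N ->
    forall z : state V L, q_ideal p g K j z = q_tf p g K j z.
Proof.
move=> _ _ _ p_distr _ j _ z.
rewrite q_idealE // /q_tf.
under eq_bigr do rewrite q_tf_jointE.
rewrite -mulr_suml /consistent_mass big_mkcond; congr (_ * _).
by apply: eq_bigr => x _; case: consistent; rewrite ?mulr1 ?mulr0.
Qed.
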